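(* Let $m\ge1$ and let $u,v,p,q\in\mathbb{R}[x,y,z,w]$ be homogeneous of degree $m$ with $yp=zv$ and $yq=wv$. Define polynomials $U,V,P,Q$ by the quaternion identity $$U+\mathbf{i}V+\mathbf{j}P+\mathbf{k}Q=(x+\mathbf{i}y+\mathbf{j}z+\mathbf{k}w)(u+\mathbf{i}v+\mathbf{j}p+\mathbf{k}q),$$ and let $\Phi=(U,V,P,Q):\mathbb{R}^4\to\mathbb{R}^4$. Then at every point with $y\neq0$, $$|J(\Phi)|=\frac{(m+1)V^2\left[\,y(x^2+y^2+z^2+w^2)(v u_x-u v_x)+y^2u^2+v^2(y^2+z^2+w^2)\,\right]}{y^4}.$$
   Context: $\mathbb{H}$ is the real quaternion algebra with basis $1,\mathbf{i},\mathbf{j},\mathbf{k}$, $\mathbf{i}^2=\mathbf{j}^2=\mathbf{k}^2=-1$, $\mathbf{ij}=-\mathbf{ji}=\mathbf{k}$, $\mathbf{jk}=-\mathbf{kj}=\mathbf{i}$, $\mathbf{ki}=-\mathbf{ik}=\mathbf{j}$. For $F=(F_1,\dots,F_4):\mathbb{R}^4\to\mathbb{R}^4$ in variables $(x,y,z,w)$, $J(F)=[\partial F_i/\partial x_j]$ and $|J(F)|$ is its determinant; subscripts denote partial derivatives. *)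

From Stdlib Require Import Reals List.
Import ListNotations.
Open Scope R_scope.

(* A real polynomial in (x,y,z,w): a finite list of monomials
   (coefficient, (a,b,c,d)) standing for coef * x^a y^b z^c w^d. *)
Definition poly4 := list (R * (nat * nat * nat * nat)).

Definition mon_eval (t : R * (nat * nat * nat * nat)) (x y z w : R) : R :=
  match t with (c, (a, b, e, d)) => c * x ^ a * y ^ b * z ^ e * w ^ d end.

Definition peval (p : poly4) (x y z w : R) : R :=
  fold_right (fun t acc => mon_eval t x y z w + acc) 0 p.

Definition homog (m : nat) (p : poly4) : Prop :=
  Forall (fun t => match t with (_, (a, b, e, d)) => (a + b + e + d = m)%nat end) p.

(* Quaternion product of (a0 + i a1 + j a2 + k a3) and (b0 + i b1 + j b2 + k b3) *)
Definition qmul (a b : R * R * R * R) : R * R * R * R :=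
  match a, b with (a0, a1, a2, a3), (b0, b1, b2, b3) =>
    (a0*b0 - a1*b1 - a2*b2 - a3*b3,
     a0*b1 + a1*b0 + a2*b3 - a3*b2,
     a0*b2 - a1*b3 + a2*b0 + a3*b1,
     a0*b3 + a1*b2 - a2*b1 + a3*b0)
  end.

Definition R4fun := R -> R -> R -> R -> R.

(* pd j f x y z w l : the partial derivative of f w.r.t. its j-th variable
   (0:x, 1:y, 2:z, 3:w) at (x,y,z,w) exists and equals l *)
Definition pd (j : nat) (f : R4fun) (x y z w l : R) : Prop :=
  match j with
  | O => derivable_pt_lim (fun t => f t y z w) x l
  | 1%nat => derivable_pt_lim (fun t => f x t z w) y l
  | 2%nat => derivable_pt_lim (fun t => f x y t w) z l
  | _ => derivable_pt_lim (fun t => f x y z t) w l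
  end.

Definition det3 (a : nat -> nat -> R) (r0 r1 r2 c0 c1 c2 : nat) : R :=
  a r0 c0 * (a r1 c1 * a r2 c2 - a r1 c2 * a r2 c1)
  - a r0 c1 * (a r1 c0 * a r2 c2 - a r1 c2 * a r2 c0)
  + a r0 c2 * (a r1 c0 * a r2 c1 - a r1 c1 * a r2 c0).

Definition det4 (a : nat -> nat -> R) : R :=
  a 0%nat 0%nat * det3 a 1 2 3 1 2 3
  - a 0%nat 1%nat * det3 a 1 2 3 0 2 3
  + a 0%nat 2%nat * det3 a 1 2 3 0 1 3
  - a 0%nat 3%nat * det3 a 1 2 3 0 1 2.

Definition jac_det (F : nat -> R4fun) (x y z w d : R) : Prop :=
  exists a : nat -> nat -> R,
    (forall i j, (i < 4)%nat -> (j < 4)%nat -> pd j (F i) x y z w (a i j)) /\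
    d = det4 a.

Definition Phi (u v p q : poly4) (i : nat) : R4fun :=
  fun x y z w =>
    match qmul (x, y, z, w) (peval u x y z w, peval v x y z w,
                             peval p x y z w, peval q x y z w) with
    | (U, V, P, Q) =>
        match i with O => U | 1%nat => V | 2%nat => P | _ => Q end
    end.

From Stdlib Require Import Reals List Lra FunctionalExtensionality.
Open Scope R_scope.

(* By the product rule for quaternion multiplication, the Jacobian matrix of
   Phi = X F with X = (x,y,z,w) and F = (u,v,p,q) has columns
   e_j F + X (d_j F).  Differentiating y p = z v and y q = w v expresses the
   partials of p and q through those of v, and Euler's identity for the
   homogeneous u and v eliminates u_y and v_y; what remains is a rational
   identity in the values and the x-, z-, w-partials of u and v. *)

Definition qcomp {A : Type} (i : nat) (a : A * A * A * A) : A :=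
  match a with (a0, a1, a2, a3) =>
    match i with O => a0 | 1%nat => a1 | 2%nat => a2 | _ => a3 end end.

Definition qbasis (j : nat) : R * R * R * R :=
  match j with
  | O => (1, 0, 0, 0) | 1%nat => (0, 1, 0, 0) | 2%nat => (0, 0, 1, 0) | _ => (0, 0, 0, 1)
  end.

Definition qtuple (A : nat -> R4fun) (x y z w : R) : R * R * R * R :=
  (A 0%nat x y z w, A 1%nat x y z w, A 2%nat x y z w, A 3%nat x y z w).

Section PartialCalculus.

Variables (j : nat) (x y z w : R).

Lemma pd_eq f l1 l2 : pd j f x y z w l1 -> l1 = l2 -> pd j f x y z w l2.
Proof. now intros H <-. Qed.

Lemma pd_unique f l1 l2 : pd j f x y z w l1 -> pd j f x y z w l2 -> l1 = l2.
Proof. destruct j as [|[|[|k]]]; apply uniqueness_limite. Qed.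

Lemma pd_ext f g l : (forall x y z w, f x y z w = g x y z w) ->
  pd j f x y z w l -> pd j g x y z w l.
Proof.
  intros E; replace g with f; [easy |].
  do 4 (apply functional_extensionality; intro); apply E.
Qed.

Lemma pd_plus f g lf lg : pd j f x y z w lf -> pd j g x y z w lg ->
  pd j (fun x y z w => f x y z w + g x y z w) x y z w (lf + lg).
Proof. destruct j as [|[|[|k]]]; apply derivable_pt_lim_plus. Qed.

Lemma pd_minus f g lf lg : pd j f x y z w lf -> pd j g x y z w lg ->
  pd j (fun x y z w => f x y z w - g x y z w) x y z w (lf - lg).
Proof. destruct j as [|[|[|k]]]; apply derivable_pt_lim_minus. Qed.

Lemma pd_mul f g lf lg : pd j f x y z w lf -> pd j g x y z w lg ->
  pd j (fun x y z w => f x y z w * g x y z w) x y z w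
    (lf * g x y z w + f x y z w * lg).
Proof. destruct j as [|[|[|k]]]; apply derivable_pt_lim_mult. Qed.

Lemma pd_coord k :
  pd j (fun x y z w => qcomp k (x, y, z, w)) x y z w (qcomp k (qbasis j)).
Proof.
  destruct j as [|[|[|i]]], k as [|[|[|l]]];
    first [apply derivable_pt_lim_id | apply derivable_pt_lim_const].
Qed.

End PartialCalculus.

Lemma pd_coord_mul_identity k l j f g x y z w lf lg :
  (forall x y z w, qcomp k (x, y, z, w) * f x y z w = qcomp l (x, y, z, w) * g x y z w) ->
  pd j f x y z w lf -> pd j g x y z w lg ->
  qcomp k (qbasis j) * f x y z w + qcomp k (x, y, z, w) * lf
  = qcomp l (qbasis j) * g x y z w + qcomp l (x, y, z, w) * lg.
Proof.
  intros E Hf Hg.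
  apply (pd_unique j x y z w (fun x y z w => qcomp k (x, y, z, w) * f x y z w)).
  - exact (pd_mul _ _ _ _ _ _ _ _ _ (pd_coord j x y z w k) Hf).
  - apply (pd_ext _ _ _ _ _ (fun x y z w => qcomp l (x, y, z, w) * g x y z w)).
    + intros; symmetry; apply E.
    + exact (pd_mul _ _ _ _ _ _ _ _ _ (pd_coord j x y z w l) Hg).
Qed.

Lemma pd_qmul i j A B dA dB x y z w :
  (forall k, pd j (A k) x y z w (qcomp k dA)) ->
  (forall k, pd j (B k) x y z w (qcomp k dB)) ->
  pd j (fun x y z w => qcomp i (qmul (qtuple A x y z w) (qtuple B x y z w))) x y z w
    (qcomp i (qmul dA (qtuple B x y z w)) + qcomp i (qmul (qtuple A x y z w) dB)).
Proof.
  intros HA HB.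
  destruct dA as [[[a0 a1] a2] a3], dB as [[[b0 b1] b2] b3].
  pose proof (HA 0%nat); pose proof (HA 1%nat); pose proof (HA 2%nat); pose proof (HA 3%nat).
  pose proof (HB 0%nat); pose proof (HB 1%nat); pose proof (HB 2%nat); pose proof (HB 3%nat).
  destruct i as [|[|[|i]]]; cbv beta iota delta [qcomp qmul qtuple] in *;
    (eapply pd_eq;
     [ repeat first [ apply pd_minus | apply pd_plus | apply pd_mul | eassumption ]
     | ring ]).
Qed.

Definition mon_deriv (j : nat) (t : R * (nat * nat * nat * nat)) (x y z w : R) : R :=
  match t with (c, (a, b, e, d)) =>
    match j with
    | O => c * (INR a * x ^ pred a) * y ^ b * z ^ e * w ^ d
    | 1%nat => c * x ^ a * (INR b * y ^ pred b) * z ^ e * w ^ d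
    | 2%nat => c * x ^ a * y ^ b * (INR e * z ^ pred e) * w ^ d
    | _ => c * x ^ a * y ^ b * z ^ e * (INR d * w ^ pred d)
    end
  end.

Definition pderiv (j : nat) (p : poly4) (x y z w : R) : R :=
  fold_right (fun t acc => mon_deriv j t x y z w + acc) 0 p.

Lemma pd_mon_eval j t x y z w : pd j (mon_eval t) x y z w (mon_deriv j t x y z w).
Proof.
  destruct t as [c [[[a b] e] d]].
  destruct j as [|[|[|j]]];
    (eapply pd_eq;
     [ cbv beta iota delta [pd mon_eval];
       repeat first [ apply derivable_pt_lim_const | apply derivable_pt_lim_pow
                    | apply derivable_pt_lim_mult ]
     | cbv beta iota delta [mon_eval mon_deriv]; ring ]).
Qed.

Lemma pd_peval j p x y z w : pd j (peval p) x y z w (pderiv j p x y z w).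
Proof.
  induction p as [|t p IH].
  - destruct j as [|[|[|j]]]; apply derivable_pt_lim_const.
  - exact (pd_plus _ _ _ _ _ _ _ _ _ (pd_mon_eval j t x y z w) IH).
Qed.

Lemma mon_euler t x y z w :
  x * mon_deriv 0 t x y z w + y * mon_deriv 1 t x y z w
  + z * mon_deriv 2 t x y z w + w * mon_deriv 3 t x y z w
  = INR (match t with (_, (a, b, e, d)) => a + b + e + d end) * mon_eval t x y z w.
Proof.
  destruct t as [c [[[a b] e] d]]; cbn [mon_deriv mon_eval].
  rewrite !plus_INR.
  destruct a, b, e, d; cbn [pred pow]; rewrite ?S_INR, ?INR_0; ring.
Qed.

Lemma homog_euler m p x y z w : homog m p ->
  x * pderiv 0 p x y z w + y * pderiv 1 p x y z w
  + z * pderiv 2 p x y z w + w * pderiv 3 p x y z w = INR m * peval p x y z w.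
Proof.
  induction 1 as [|t p Ht _ IH].
  - cbn; ring.
  - pose proof (mon_euler t x y z w) as Et.
    destruct t as [c [[[a b] e] d]]; rewrite Ht in Et.
    unfold pderiv, peval in *; cbn [fold_right].
    lra.
Qed.

Lemma det4_quaternion_jacobian (m x y z w u v p q : R) (du dv dp dq : nat -> R) :
  y <> 0 -> y * p = z * v -> y * q = w * v ->
  (forall j, qcomp 1 (qbasis j) * p + y * dp j = qcomp 2 (qbasis j) * v + z * dv j) ->
  (forall j, qcomp 1 (qbasis j) * q + y * dq j = qcomp 3 (qbasis j) * v + w * dv j) ->
  x * du 0%nat + y * du 1%nat + z * du 2%nat + w * du 3%nat = m * u ->
  x * dv 0%nat + y * dv 1%nat + z * dv 2%nat + w * dv 3%nat = m * v ->
  det4 (fun i j => qcomp i (qmul (qbasis j) (u, v, p, q))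
                   + qcomp i (qmul (x, y, z, w) (du j, dv j, dp j, dq j)))
  = (m + 1) * (qcomp 1 (qmul (x, y, z, w) (u, v, p, q))) ^ 2 *
      (y * (x ^ 2 + y ^ 2 + z ^ 2 + w ^ 2) * (v * du 0%nat - u * dv 0%nat)
       + y ^ 2 * u ^ 2 + v ^ 2 * (y ^ 2 + z ^ 2 + w ^ 2)) / y ^ 4.
Proof.
  intros Hy Hp Hq Hdp Hdq Hu Hv.
  assert (solve : forall a b, y * a = b -> a = b / y) by (intros a b <-; field; exact Hy).
  pose proof (Hdp 0%nat) as Hdp0; pose proof (Hdp 1%nat) as Hdp1;
  pose proof (Hdp 2%nat) as Hdp2; pose proof (Hdp 3%nat) as Hdp3;
  pose proof (Hdq 0%nat) as Hdq0; pose proof (Hdq 1%nat) as Hdq1;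
  pose proof (Hdq 2%nat) as Hdq2; pose proof (Hdq 3%nat) as Hdq3.
  cbn [qcomp qbasis] in *.
  assert (Ep0 : dp 0%nat = z * dv 0%nat / y) by (apply solve; lra).
  assert (Ep1 : dp 1%nat = (z * dv 1%nat - p) / y) by (apply solve; lra).
  assert (Ep2 : dp 2%nat = (v + z * dv 2%nat) / y) by (apply solve; lra).
  assert (Ep3 : dp 3%nat = z * dv 3%nat / y) by (apply solve; lra).
  assert (Eq0 : dq 0%nat = w * dv 0%nat / y) by (apply solve; lra).
  assert (Eq1 : dq 1%nat = (w * dv 1%nat - q) / y) by (apply solve; lra).
  assert (Eq2 : dq 2%nat = w * dv 2%nat / y) by (apply solve; lra).
  assert (Eq3 : dq 3%nat = (v + w * dv 3%nat) / y) by (apply solve; lra).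
  assert (Eu1 : du 1%nat = (m * u - x * du 0%nat - z * du 2%nat - w * du 3%nat) / y)
    by (apply solve; lra).
  assert (Ev1 : dv 1%nat = (m * v - x * dv 0%nat - z * dv 2%nat - w * dv 3%nat) / y)
    by (apply solve; lra).
  unfold det4, det3; cbn [qcomp qmul qbasis].
  rewrite Ep0, Ep1, Ep2, Ep3, Eq0, Eq1, Eq2, Eq3, Eu1, Ev1, (solve p _ Hp), (solve q _ Hq).
  field; exact Hy.
Qed.

Theorem corollary3p1 (m : nat) (u v p q : poly4) :
  (1 <= m)%nat ->
  homog m u -> homog m v -> homog m p -> homog m q ->
  (forall x y z w, y * peval p x y z w = z * peval v x y z w) ->
  (forall x y z w, y * peval q x y z w = w * peval v x y z w) ->
  forall x y z w ux vx : R,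
    y <> 0 ->
    pd 0 (peval u) x y z w ux ->
    pd 0 (peval v) x y z w vx ->
    jac_det (Phi u v p q) x y z w
      ((INR m + 1) * (Phi u v p q 1%nat x y z w) ^ 2 *
        (y * (x^2 + y^2 + z^2 + w^2) * (peval v x y z w * ux - peval u x y z w * vx)
         + y^2 * (peval u x y z w)^2
         + (peval v x y z w)^2 * (y^2 + z^2 + w^2)) / y ^ 4).
Proof.
  intros _ Hu Hv _ _ Hp Hq x y z w ux vx Hy Hux Hvx.
  rewrite (pd_unique _ _ _ _ _ _ _ _ Hux (pd_peval 0 u x y z w)),
    (pd_unique _ _ _ _ _ _ _ _ Hvx (pd_peval 0 v x y z w)).
  set (F := fun k => peval (qcomp k (u, v, p, q))).
  exists (fun i j => qcomp i (qmul (qbasis j) (qtuple F x y z w))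
    + qcomp i (qmul (x, y, z, w) (qtuple (fun k => pderiv j (qcomp k (u, v, p, q))) x y z w))).
  split.
  - intros i j _ _.
    refine (pd_qmul i j (fun k x y z w => qcomp k (x, y, z, w)) F _ _ x y z w
      (pd_coord j x y z w) _).
    intros [|[|[|k]]]; apply pd_peval.
  - symmetry; apply (det4_quaternion_jacobian (INR m)).
    + exact Hy.
    + apply Hp.
    + apply Hq.
    + intro j; apply (pd_coord_mul_identity 1 2 j); [exact Hp | apply pd_peval ..].
    + intro j; apply (pd_coord_mul_identity 1 3 j); [exact Hq | apply pd_peval ..].
    + apply homog_euler, Hu.
    + apply homog_euler, Hv.
Qed.
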